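(* (i) For any positive integers $a,r$ there exists an $(ra^2,2,ra,r)$-PSEDF in $\mathbb{Z}_{ra^2}$. (ii) For any positive integers $\lambda,a$ there exists a non-disjoint $(\lambda a^2,2,\lambda a,\lambda)$-SEDF in $\mathbb{Z}_{\lambda a^2}$. (iii) For any positive integer $k$, the sets $\{0,1,\dots,k-1\}$ and $\{0,k,2k,\dots,(k-1)k\}$ form a non-disjoint $(k^2,2,k,1)$-SEDF in $\mathbb{Z}_{k^2}$.
   Context: Groups are written additively. For subsets $A,B$ of a group $G$, $\Delta(A,B)$ is the multiset $\{a-b:a\in A,b\in B\}$ and $\lambda G$ is the multiset with each element of $G$ exactly $\lambda$ times. For $G$ of order $v$ and $m>1$, a family of $k$-subsets $\{A_1,\dots,A_m\}$ of $G$ is a $(v,m,k,\lambda)$-PSEDF if $\Delta(A_i,A_j)=\lambda G$ for every $i\neq j$; it is a non-disjoint $(v,m,k,\lambda)$-SEDF if for each $i$ the multiset union $\bigcup_{j\neq i}\Delta(A_i,A_j)$ equals $\lambda G$. The sets need not be disjoint. *)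

From HB Require Import structures.
From mathcomp Require Import all_boot all_order all_algebra.
Set Implicit Arguments. Unset Strict Implicit. Unset Printing Implicit Defensive.
Import GRing.Theory.
Local Open Scope ring_scope.

(* The cyclic group Z_v for v >= 1: ordinals 'I_v with arithmetic mod v.
   (For v >= 1, v.-1.+1 = v; we avoid 'Z_v, which is wrong for v = 1.) *)
Notation Zmod v := 'I_(v.-1).+1.

Definition diff_mult (G : finZmodType) (A B : {set G}) (g : G) : nat :=
  #|[set ab : G * G | [&& ab.1 \in A, ab.2 \in B & ab.1 - ab.2 == g]]|.

Definition PSEDF (G : finZmodType) (v m k lam : nat) (A : 'I_m -> {set G}) : Prop :=
  [/\ #|G| = v, (1 < m)%N, (forall i, #|A i| = k) &
      forall i j : 'I_m, i != j -> forall g : G, diff_mult (A i) (A j) g = lam].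

(* (possibly non-disjoint) (v,m,k,lambda)-SEDF: the multiset union over j <> i of
   Delta(A_i,A_j) equals lambda G, for each i. Disjointness is not required. *)
Definition SEDF (G : finZmodType) (v m k lam : nat) (A : 'I_m -> {set G}) : Prop :=
  [/\ #|G| = v, (1 < m)%N, (forall i, #|A i| = k) &
      forall (i : 'I_m) (g : G), (\sum_(j < m | j != i) diff_mult (A i) (A j) g)%N = lam].
Arguments PSEDF {G} v m k lam A.
Arguments SEDF {G} v m k lam A.

From mathcomp Require Import all_boot all_order all_algebra.
Set Implicit Arguments. Unset Strict Implicit. Unset Printing Implicit Defensive.
Import GRing.Theory.

(* Take A = {0, ..., ra - 1} and B = aZ in Z_(ra^2).  Since a divides the
   modulus, x - y = g with x in A and y in B exactly when x = g (mod a), and A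
   consists of r full residue systems mod a; so Delta(A, B) = r Z_(ra^2), and
   Delta(B, A) = -Delta(A, B) as well.  For two sets a PSEDF is an SEDF, and
   (iii) is the case r = 1, a = k. *)

Section DiffMult.
Variable G : finZmodType.
Implicit Types (X Y : {set G}) (g : G).
Local Open Scope ring_scope.

Lemma diff_multE X Y g : diff_mult X Y g = #|[set x in X | x - g \in Y]|.
Proof.
have inj_graph : injective (fun x => (x, x - g)) by move=> x y /(congr1 fst).
rewrite /diff_mult -(card_imset _ inj_graph); apply: eq_card => -[x y].
rewrite !inE /=; apply/and3P/imsetP => [[Xx Yy /eqP <-]|].
  by exists x; rewrite ?inE ?subKr ?Xx ?Yy.
by case=> z; rewrite inE => /andP[Xz Yzg] [-> ->]; rewrite Xz Yzg subKr.
Qed.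

Lemma diff_mult_sym X Y g : diff_mult Y X g = diff_mult X Y (- g).
Proof.
rewrite !diff_multE opprK -(card_imset [set x in X | x + g \in Y] (addIr g)).
apply: eq_card => y.
rewrite !inE; apply/andP/imsetP => [[Yy Xyg]|[x]].
  by exists (y - g); rewrite ?inE ?Xyg ?subrK.
by rewrite inE => /andP[Xx Yxg] ->; rewrite Yxg addrK.
Qed.

End DiffMult.

Lemma count_eqmod_iota a q c :
  0 < a -> count (fun x => x == c %[mod a]) (iota 0 (q * a)) = q.
Proof.
move=> a_gt0; elim: q => [//|q IHq].
have one_period : count (fun x => x == c %[mod a]) (iota 0 a) = 1.
  transitivity (count_mem (c %% a) (iota 0 a)).
    by apply: eq_in_count => x; rewrite mem_iota /= => /modn_small ->.
  by rewrite count_uniq_mem ?iota_uniq // mem_iota ltn_pmod.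
rewrite mulSnr iotaD count_cat IHq add0n -[q * a]addn0 iotaDl count_map.
by rewrite -addn1 -one_period; congr (_ + _); apply: eq_count => x; rewrite /= modnMDl.
Qed.

Lemma card_ord_count n (P : pred nat) : #|[set x : 'I_n | P x]| = count P (iota 0 n).
Proof.
rewrite cardE /enum_mem -enumT size_filter -val_enum_ord count_map.
by apply: eq_count => x; rewrite /= inE.
Qed.

Lemma card_ord_prefix n m (P : pred nat) :
  m <= n -> #|[set x : 'I_n | (x < m) && P x]| = count P (iota 0 m).
Proof.
move=> le_mn; rewrite (card_ord_count n (fun x => (x < m) && P x)) -(subnKC le_mn) iotaD count_cat add0n.
rewrite (@eq_in_count _ _ pred0 (iota m _)) ?count_pred0 ?addn0; last first.
  by move=> x; rewrite mem_iota => /andP[/leq_gtF ->].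
by apply: eq_in_count => x; rewrite mem_iota add0n /= => ->.
Qed.

Lemma dvdn_val_subZp n' a (x g : 'I_n'.+1) :
  a %| n'.+1 -> (a %| val (x - g)%R) = (x == g %[mod a]).
Proof.
move=> dvd_an; have le_gn : g <= n'.+1 by apply: ltnW.
rewrite /dvdn /= modn_dvdm // -modnDmr modn_dvdm // modnDmr addnBA //.
rewrite -[_ == 0]/(a %| _) -eqn_mod_dvd ?(leq_trans le_gn (leq_addl _ _)) //.
by rewrite -modnDmr (eqP dvd_an) addn0.
Qed.

Definition Zp_iota n' m : {set 'I_n'.+1} := [set inZp i | i : 'I_m].

Definition Zp_multiples n' m a : {set 'I_n'.+1} := [set inZp (i * a) | i : 'I_m].

Definition Zp_pair n' m a (j : 'I_2) : {set 'I_n'.+1} :=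
  if val j == 0 then Zp_iota n' m else Zp_multiples n' m a.

Section IotaMultiples.
Variables (n' m a : nat).
Hypotheses (nE : n'.+1 = m * a) (a_gt0 : 0 < a).

Let le_m_n : m <= n'.+1.
Proof. by rewrite nE leq_pmulr. Qed.

Let lt_mul_n (i : 'I_m) : i * a < n'.+1.
Proof. by rewrite nE ltn_mul2r a_gt0 ltn_ord. Qed.

Lemma mem_Zp_iota x : (x \in Zp_iota n' m) = (x < m).
Proof.
apply/imsetP/idP => [[i _ ->] /=|lt_xm].
  by rewrite modn_small ?(leq_trans (ltn_ord i)).
by exists (Ordinal lt_xm) => //; apply: val_inj; rewrite /= modn_small.
Qed.

Lemma mem_Zp_multiples x : (x \in Zp_multiples n' m a) = (a %| x).
Proof.
apply/imsetP/idP => [[i _ ->] /=|dvd_ax].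
  by rewrite modn_small ?dvdn_mull.
have lt_xa_m : x %/ a < m by rewrite ltn_divLR // -nE.
by exists (Ordinal lt_xa_m) => //; apply: val_inj; rewrite /= divnK ?modn_small.
Qed.

Lemma card_Zp_iota : #|Zp_iota n' m| = m.
Proof.
rewrite card_imset ?card_ord // => i j /(congr1 val) /=.
by rewrite !modn_small ?(leq_trans (ltn_ord _) le_m_n) //; apply: val_inj.
Qed.

Lemma card_Zp_multiples : #|Zp_multiples n' m a| = m.
Proof.
rewrite card_imset ?card_ord // => i j /(congr1 val) /=.
by rewrite !modn_small // => /eqP; rewrite eqn_pmul2r // => /eqP /val_inj.
Qed.

Lemma diff_mult_Zp_iota_multiples q g :
  m = q * a -> diff_mult (Zp_iota n' m) (Zp_multiples n' m a) g = q.
Proof.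
move=> mE; rewrite diff_multE.
transitivity #|[set x : 'I_n'.+1 | (x < m) && (x == g %[mod a])]|.
  apply: eq_card => x; rewrite !inE mem_Zp_iota mem_Zp_multiples.
  by rewrite dvdn_val_subZp // nE dvdn_mull.
by rewrite (card_ord_prefix (fun x => x == g %[mod a])) // mE count_eqmod_iota.
Qed.

End IotaMultiples.

Lemma PSEDF_pair (G : finZmodType) v k lam (A : 'I_2 -> {set G}) :
  #|G| = v -> #|A ord0| = k -> #|A ord_max| = k ->
  (forall g, diff_mult (A ord0) (A ord_max) g = lam) -> PSEDF v 2 k lam A.
Proof.
move=> Gv A0k A1k A01; have ord2 (i : 'I_2) : i = ord0 \/ i = ord_max.
  by case: i => [[|[|//]] ?]; [left | right]; apply: val_inj.
split=> // [i|i j]; first by have [->|->] := ord2 i.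
have [->|->] := ord2 i; have [->|->] := ord2 j; rewrite ?eqxx // => _ g.
by rewrite diff_mult_sym.
Qed.

Lemma PSEDF_SEDF (G : finZmodType) v m k lam (A : 'I_m -> {set G}) :
  PSEDF v m k lam A -> SEDF v m k (m.-1 * lam) A.
Proof.
case=> Gv m_gt1 Ak AA; split=> // i g.
rewrite (eq_bigr (fun=> lam)) => [|j ji]; last by rewrite AA // eq_sym.
by rewrite sum_nat_const cardC1 card_ord.
Qed.

Lemma PSEDF_Zp_pair r a :
  0 < a -> 0 < r ->
  PSEDF (r * a ^ 2) 2 (r * a) r (Zp_pair (r * a ^ 2).-1 (r * a) a).
Proof.
move=> a_gt0 r_gt0; have n_gt0 : 0 < r * a ^ 2 by rewrite muln_gt0 r_gt0 expn_gt0 a_gt0.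
have nE : (r * a ^ 2).-1.+1 = r * a * a by rewrite prednK // -mulnA mulnn.
apply: PSEDF_pair => [|||g].
- by rewrite card_ord prednK.
- exact: card_Zp_iota nE a_gt0.
- exact: card_Zp_multiples nE a_gt0.
- exact: (diff_mult_Zp_iota_multiples nE a_gt0 g (erefl (r * a))).
Qed.

Theorem corollary3p2 :
  (* (i) *)
  (forall a r : nat, (0 < a)%N -> (0 < r)%N ->
     exists A : 'I_2 -> {set Zmod (r * a ^ 2)},
       PSEDF (r * a ^ 2) 2 (r * a) r A) /\
  (* (ii) *)
  (forall lam a : nat, (0 < lam)%N -> (0 < a)%N ->
     exists A : 'I_2 -> {set Zmod (lam * a ^ 2)},
       SEDF (lam * a ^ 2) 2 (lam * a) lam A) /\
  (* (iii) *)
  (forall k : nat, (0 < k)%N ->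
     SEDF (k ^ 2) 2 k 1
       (fun j : 'I_2 =>
          if val j == 0%N
          then [set (inZp i : Zmod (k ^ 2)) | i : 'I_k]
          else [set (inZp (i * k) : Zmod (k ^ 2)) | i : 'I_k])).
Proof.
split; [|split].
- by move=> a r a_gt0 r_gt0; exists (Zp_pair _ (r * a) a); apply: PSEDF_Zp_pair.
- move=> lam a lam_gt0 a_gt0; exists (Zp_pair _ (lam * a) a).
  by have := PSEDF_SEDF (PSEDF_Zp_pair a_gt0 lam_gt0); rewrite mul1n.
- move=> k k_gt0.
  by have := PSEDF_SEDF (PSEDF_Zp_pair k_gt0 (ltn0Sn 0)); rewrite !mul1n.
Qed.
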